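(* Let $q>0$ and let $(p_n)_{n\ge1}$ be the $q$-Mallows process. Then for every $n\ge1$, $p_n$ is distributed according to the Mallows measure $\mu_{n,1/q}$.
   Context: For $q>0$ and $n\ge1$, $\mu_{n,q}(\pi)=q^{\mathrm{inv}(\pi)}/Z_{n,q}$ on $S_n$, with $\mathrm{inv}(\pi)$ the number of pairs $i<j$ with $\pi(i)>\pi(j)$ and $Z_{n,q}$ a normalizing constant. The $q$-Mallows process is the sequence of random permutations $p_n\in S_n$ defined as follows: let $(p_n(n))_{n\ge1}$ be independent random variables with $\mathbb{P}(p_n(n)=j)=\frac{q^{j-1}}{1+q+\dots+q^{n-1}}$ for $1\le j\le n$; set $p_1$ to be the unique permutation of $\{1\}$, and for $n\ge2$ define $p_n$ by the given value $p_n(n)$ and, for $1\le i\le n-1$, $p_n(i)=p_{n-1}(i)$ if $p_{n-1}(i)<p_n(n)$ and $p_n(i)=p_{n-1}(i)+1$ if $p_{n-1}(i)\ge p_n(n)$. *)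

From mathcomp Require Import all_boot all_order all_algebra all_fingroup.
Set Implicit Arguments. Unset Strict Implicit. Unset Printing Implicit Defensive.
Import Order.TTheory GRing.Theory Num.Theory.

Definition inv_count (n : nat) (s : 'S_n) : nat :=
  #|[set ij : 'I_n * 'I_n | (ij.1 < ij.2)%N && (s ij.2 < s ij.1)%N]|.

Local Open Scope ring_scope.

Definition mallows (R : fieldType) (n : nat) (q : R) (s : 'S_n) : R :=
  q ^+ inv_count s / \sum_(t : 'S_n) q ^+ inv_count t.

Local Close Scope ring_scope.

(* The q-Mallows process, in 1-based values, driven by x m = p_m(m).
   mproc x n i = p_n(i) for 1 <= i <= n.  p_1 is the identity of {1};
   for n >= 2, p_n(n) = x n and p_n(i) = p_{n-1}(i) (+1 if p_{n-1}(i) >= x n). *)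
Fixpoint mproc (x : nat -> nat) (n : nat) : nat -> nat :=
  match n with
  | 0 => fun _ => 0
  | S n' =>
    match n' with
    | 0 => fun _ => 1
    | S _ => fun i =>
        if i == n then x n
        else let v := mproc x n' i in if (v < x n)%N then v else v.+1
    end
  end.

(* A realization of (p_1(1), ..., p_n(n)) is encoded (0-based) by
   c : {ffun 'I_n -> 'I_n}, with p_{k+1}(k+1) = c k + 1. *)
Definition choice_seq (n : nat) (c : {ffun 'I_n -> 'I_n}) : nat -> nat :=
  fun m => oapp (fun k : 'I_n => (c k).+1) 0%N (insub m.-1).

Local Open Scope ring_scope.

(* Joint law of independent p_m(m), m = 1..n:
   P(p_m(m) = j) = q^(j-1) / (1 + q + ... + q^(m-1)) for 1 <= j <= m, 0 otherwise. *)
Definition choice_weight (R : fieldType) (n : nat) (q : R)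
    (c : {ffun 'I_n -> 'I_n}) : R :=
  \prod_(k < n)
    (if (c k <= k)%N then q ^+ (c k) / \sum_(i < k.+1) q ^+ i else 0).

(* P(p_n = s), s a permutation of {0..n-1} read 1-based as i+1 |-> s i + 1. *)
Definition qmallows_law (R : fieldType) (n : nat) (q : R) (s : 'S_n) : R :=
  \sum_(c : {ffun 'I_n -> 'I_n}
        | [forall i : 'I_n, mproc (choice_seq c) n i.+1 == (s i).+1])
    choice_weight q c.

From mathcomp Require Import all_boot all_order all_algebra all_fingroup.
From mathcomp Require Import zify.
Import Order.TTheory GRing.Theory Num.Theory.
Set Implicit Arguments. Unset Strict Implicit.

(* Write the realization as a sequence [p_n(1); ...; p_n(n)]: step m bumps
   the earlier values >= x_m and appends x_m, so it preserves the earlier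
   inversions and adds exactly m - x_m new ones.  Hence an admissible choice
   sequence x (1 <= x_m <= m) has weight q^(sum_m (x_m - 1)) / [n]_q! =
   q^(n(n-1)/2 - inv p_n) / [n]_q!.  The last value and the unbumped prefix
   recover x from p_n, and there are n! admissible sequences, so every
   permutation is realized by exactly one of them; the law of p_n is thus
   proportional to q^(-inv), and normalizing gives mu_{n,1/q}. *)

Definition mproc_seq (x : nat -> nat) (n : nat) : seq nat :=
  map (mproc x n) (iota 1 n).

Fixpoint inversions (s : seq nat) : nat :=
  if s is v :: t then (count (fun w => w < v) t + inversions t)%N else 0%N.

Definition admissible_choices (x : nat -> nat) (n : nat) : Prop :=
  forall m, (2 <= m <= n)%N -> (1 <= x m <= m)%N.

Lemma bump_inj h : injective (bump h).
Proof. exact: can_inj (bumpK h). Qed.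

Lemma size_mproc_seq x n : size (mproc_seq x n) = n.
Proof. by rewrite size_map size_iota. Qed.

Lemma nth_mproc_seq x n i : (i < n)%N -> nth 0 (mproc_seq x n) i = mproc x n i.+1.
Proof. by move=> lt_in; rewrite (nth_map 0) ?size_iota // nth_iota // add1n. Qed.

Lemma mproc_seqS x n : (0 < n)%N ->
  mproc_seq x n.+1 = rcons (map (bump (x n.+1)) (mproc_seq x n)) (x n.+1).
Proof.
case: n => // n _.
rewrite /mproc_seq -[X in iota _ X]addn1 iotaD map_cat -cats1 -map_comp.
congr (_ ++ _); last by rewrite /= add1n eqxx.
apply/eq_in_map => i; rewrite mem_iota => /andP[_ lt_i] /=.
rewrite ltn_eqF; last by lia.
by rewrite /bump; case: ltnP.
Qed.

Lemma mproc_seq_uniq_range x n : admissible_choices x n ->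
  uniq (mproc_seq x n) && all (fun v => 0 < v <= n)%N (mproc_seq x n).
Proof.
elim: n => // -[_ _|n IH x_adm]; first by [].
have /andP[uniq_s range_s] : uniq (mproc_seq x n.+1) &&
    all (fun v => 0 < v <= n.+1)%N (mproc_seq x n.+1).
  by apply: IH => m m_range; apply: x_adm; lia.
have xn := x_adm n.+2 ltac:(lia).
rewrite mproc_seqS // rcons_uniq (map_inj_uniq (@bump_inj _)) uniq_s.
rewrite all_rcons all_map xn andbT; apply/andP; split.
  by apply/mapP => -[v _ /eqP]; rewrite (negbTE (neq_bump _ _)).
by apply/allP => v /(allP range_s) /=; rewrite /bump; lia.
Qed.

Lemma perm_iota_mproc_seq x n : admissible_choices x n ->
  perm_eq (mproc_seq x n) (iota 1 n).
Proof.
move=> x_adm; have /andP[uniq_s range_s] := mproc_seq_uniq_range x_adm.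
apply: uniq_perm => //; first exact: iota_uniq.
have sub_s : {subset mproc_seq x n <= iota 1 n}.
  by move=> v /(allP range_s); rewrite mem_iota; lia.
by have [] := uniq_min_size uniq_s sub_s; rewrite ?size_iota ?size_mproc_seq.
Qed.

Lemma inversions_rcons s a :
  inversions (rcons s a) = (inversions s + count (fun w => a < w) s)%N.
Proof.
elim: s => //= v s ->; rewrite -cats1 count_cat /=.
by case: (ltnP a v); lia.
Qed.

Lemma inversions_map_bump a s : inversions (map (bump a) s) = inversions s.
Proof.
elim: s => //= v s ->; rewrite count_map; congr (_ + _)%N.
by apply: eq_count => w /=; rewrite !ltnNge leq_bump2.
Qed.

Lemma count_geq_iota a n : (0 < a)%N ->
  count (fun v => a <= v)%N (iota 1 n) = (n.+1 - a)%N.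
Proof.
move=> a_gt0; elim: n => [/=|n IH]; first lia.
by rewrite -[X in iota _ X]addn1 iotaD count_cat IH /=; lia.
Qed.

Lemma inversions_mproc_seq x n : admissible_choices x n ->
  inversions (mproc_seq x n) = (\sum_(1 <= m < n) (m.+1 - x m.+1))%N.
Proof.
elim: n => [|[_ _|n IH x_adm]]; [by rewrite big_geq..|].
have xn := x_adm n.+2 ltac:(lia).
have x_adm' : admissible_choices x n.+1 by move=> m m_range; apply: x_adm; lia.
rewrite mproc_seqS // inversions_rcons inversions_map_bump IH // (big_nat_recr n.+1) //.
congr (_ + _)%N; rewrite count_map.
rewrite (@eq_count _ _ (fun v => x n.+2 <= v)%N); last by move=> v; rewrite /= /bump; lia.
rewrite (seq.permP (perm_iota_mproc_seq x_adm')) count_geq_iota; lia.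
Qed.

Lemma mproc_seq_inj x y n : mproc_seq x n = mproc_seq y n ->
  forall m, (2 <= m <= n)%N -> x m = y m.
Proof.
elim: n => [|[|n] IH] eq_xy m m_range; try lia.
move: eq_xy; rewrite (mproc_seqS x) // (mproc_seqS y) // => eq_xy.
have eq_last : x n.+2 = y n.+2.
  by have := congr1 (last 0%N) eq_xy; rewrite !last_rcons.
move: eq_xy; rewrite eq_last => /(rcons_injl _) /(inj_map (@bump_inj _)).
by case: (m =P n.+2) => [->|ne_m] // /IH; apply; lia.
Qed.

Lemma count_nth (a : pred nat) s :
  count a s = (\sum_(0 <= j < size s) a (nth 0 s j))%N.
Proof.
elim: s => [|v s IH]; first by rewrite big_geq.
by rewrite /= big_nat_recl //= IH.
Qed.

Lemma inversionsE s : inversions s =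
  (\sum_(0 <= i < size s) \sum_(0 <= j < size s)
     ((i < j) && (nth 0 s j < nth 0 s i)))%N.
Proof.
elim: s => [|v s IH]; first by rewrite big_geq.
rewrite /= big_nat_recl //= big_nat_recl //= add0n count_nth IH.
by congr (_ + _)%N; apply: eq_bigr => i _; rewrite big_nat_recl.
Qed.

Lemma inv_count_inversions n (s : 'S_n) t : size t = n ->
  (forall i : 'I_n, nth 0 t i = (s i).+1) -> inv_count s = inversions t.
Proof.
move=> size_t nth_t; rewrite inversionsE size_t big_mkord.
under eq_bigr do rewrite big_mkord.
rewrite pair_big /inv_count -sum1_card big_mkcond /=.
by apply: eq_bigr => -[i j] _; rewrite inE /= !nth_t ltnS.
Qed.

Section ChoiceSequences.

Variable n : nat.
Implicit Types (c : {ffun 'I_n -> 'I_n}) (s : 'S_n).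

Definition admissible c : bool := [forall k, (c k <= k)%N].

Definition realizes c s : bool :=
  [forall i : 'I_n, mproc (choice_seq c) n i.+1 == (s i).+1].

Lemma choice_seqS c (k : 'I_n) : choice_seq c k.+1 = (c k).+1.
Proof. by rewrite /choice_seq /= valK. Qed.

Lemma admissible_choice_seq c : admissible c -> admissible_choices (choice_seq c) n.
Proof.
move=> /forallP c_adm m m_range; have lt_m : (m.-1 < n)%N by lia.
have := c_adm (Ordinal lt_m); have := choice_seqS c (Ordinal lt_m).
by rewrite /= prednK; lia.
Qed.

Lemma inversions_choice_seq c : admissible c ->
  inversions (mproc_seq (choice_seq c) n) = (\sum_(k < n) (k - c k))%N.
Proof.
move=> /admissible_choice_seq/inversions_mproc_seq ->.
have -> : (\sum_(k < n) (k - c k) = \sum_(0 <= m < n) (m.+1 - choice_seq c m.+1))%N.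
  by rewrite big_mkord; apply: eq_bigr => k _; rewrite choice_seqS subSS.
have [n0|n_gt0] := posnP n; first by rewrite !big_geq ?n0.
by rewrite [X in _ = X]big_ltn // (choice_seqS c (Ordinal n_gt0)).
Qed.

Lemma choice_seq_inj c c' : admissible c -> admissible c' ->
  mproc_seq (choice_seq c) n = mproc_seq (choice_seq c') n -> c = c'.
Proof.
move=> /forallP c_adm /forallP c'_adm /mproc_seq_inj eq_cc'.
apply/ffunP => k; apply: ord_inj; have [k0|k_gt0] := posnP k.
  by have := c_adm k; have := c'_adm k; rewrite k0 !leqn0 => /eqP -> /eqP ->.
by have := eq_cc' k.+1 ltac:(have := ltn_ord k; lia); rewrite !choice_seqS => -[].
Qed.

Lemma realizes_nth c s :
  realizes c s -> forall i : 'I_n, nth 0 (mproc_seq (choice_seq c) n) i = (s i).+1.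
Proof. by move=> /forallP real_cs i; rewrite nth_mproc_seq //; apply/eqP. Qed.

Lemma realizes_mproc_seq c c' s : realizes c s -> realizes c' s ->
  mproc_seq (choice_seq c) n = mproc_seq (choice_seq c') n.
Proof.
move=> /realizes_nth real_cs /realizes_nth real_c's.
apply: (@eq_from_nth _ 0%N) => [|i]; rewrite !size_mproc_seq // => lt_in.
by rewrite (real_cs (Ordinal lt_in)) (real_c's (Ordinal lt_in)).
Qed.

Lemma realizes_inj c s t : realizes c s -> realizes c t -> s = t.
Proof.
move=> /realizes_nth real_cs /realizes_nth real_ct; apply/permP => i.
by apply/val_inj/succn_inj; rewrite -real_cs real_ct.
Qed.

Lemma mproc_choice_range c (i : 'I_n) : admissible c ->
  (0 < mproc (choice_seq c) n i.+1 <= n)%N.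
Proof.
move=> /admissible_choice_seq/mproc_seq_uniq_range/andP[_ /allP range_s].
by rewrite -nth_mproc_seq //; apply/range_s/mem_nth; rewrite size_mproc_seq.
Qed.

Definition mproc_fun c (i : 'I_n) : 'I_n :=
  if admissible c then insubd i (mproc (choice_seq c) n i.+1).-1 else i.

Lemma mproc_funE c i : admissible c -> (mproc_fun c i).+1 = mproc (choice_seq c) n i.+1.
Proof.
move=> c_adm; have := mproc_choice_range i c_adm.
by rewrite /mproc_fun c_adm val_insubd; case: ifP; lia.
Qed.

Lemma mproc_fun_inj c : injective (mproc_fun c).
Proof.
move=> i j; have [c_adm|c_nadm] := boolP (admissible c); last first.
  by rewrite /mproc_fun (negbTE c_nadm).
move/(congr1 (fun k : 'I_n => k.+1)); rewrite !mproc_funE // -!nth_mproc_seq //.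
have /andP[uniq_s _] := mproc_seq_uniq_range (admissible_choice_seq c_adm).
by move/eqP; rewrite nth_uniq ?size_mproc_seq // => /eqP/ord_inj.
Qed.

Definition mproc_perm c : 'S_n := perm (@mproc_fun_inj c).

Lemma realizes_mproc_perm c : admissible c -> realizes c (mproc_perm c).
Proof. by move=> c_adm; apply/forallP => i; rewrite permE mproc_funE. Qed.

Lemma sum_ord_leq (k : 'I_n) : (\sum_(j < n) (j <= k))%N = k.+1.
Proof.
rewrite (eq_bigr (fun j : 'I_n => (j < k.+1 : nat))) // -big_mkcondr /=.
rewrite -(big_ord_widen _ (fun=> 1%N) (ltn_ord k)).
by rewrite sum1_card card_ord.
Qed.

Lemma card_admissible : #|[set c | admissible c]| = n`!.
Proof.
rewrite -sum1_card big_mkcond /=.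
rewrite (eq_bigr (fun c => \prod_(k < n) (c k <= k : nat))%N) => [|c _].
  rewrite -(bigA_distr_bigA (fun k j : 'I_n => (j <= k : nat))) /=.
  by rewrite (eq_bigr _ (fun k _ => sum_ord_leq k)) fact_prod big_add1 big_mkord.
rewrite inE; case: (boolP (admissible c)) => [/forallP c_adm|].
  by rewrite big1 // => k _; rewrite c_adm.
by rewrite negb_forall => /existsP[k /negbTE c_k]; rewrite (bigD1 k) //= c_k.
Qed.

Lemma realizes_surj s : exists2 c, admissible c & realizes c s.
Proof.
suff : s \in [set mproc_perm c | c in [set c | admissible c]].
  case/imsetP => c; rewrite inE => c_adm ->.
  by exists c => //; apply: realizes_mproc_perm.
have -> : [set mproc_perm c | c in [set c | admissible c]] = [set: 'S_n].
  apply/eqP; rewrite eqEcard subsetT cardsT card_Sn.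
  rewrite card_in_imset ?card_admissible ?leqnn //.
  move=> c c'; rewrite !inE => c_adm c'_adm eq_cc'.
  apply: (choice_seq_inj c_adm c'_adm); apply: (realizes_mproc_seq (s := mproc_perm c)).
    exact: realizes_mproc_perm.
  by rewrite eq_cc'; apply: realizes_mproc_perm.
by rewrite inE.
Qed.

End ChoiceSequences.

Local Open Scope ring_scope.

Definition qfact (R : pzSemiRingType) (q : R) (n : nat) : R :=
  \prod_(k < n) \sum_(i < k.+1) q ^+ i.

Section ChoiceWeights.

Variables (R : realFieldType) (q : R).
Hypothesis q_gt0 : 0 < q.
Variable n : nat.
Implicit Types (c : {ffun 'I_n -> 'I_n}) (s : 'S_n).

Lemma qsum_gt0 k : 0 < \sum_(i < k.+1) q ^+ i.
Proof.
rewrite big_ord_recl expr0 ltr_pwDl // sumr_ge0 // => i _.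
by rewrite exprn_ge0 ?ltW.
Qed.

Lemma choice_weight_admissible c : admissible c ->
  choice_weight q c = q ^+ (\sum_(k < n) c k)%N / qfact q n.
Proof.
move=> /forallP c_adm; rewrite /choice_weight -prodrXr -prodf_div.
by apply: eq_bigr => k _; rewrite c_adm.
Qed.

Lemma choice_weight_inadmissible c : ~~ admissible c -> choice_weight q c = 0.
Proof.
rewrite negb_forall => /existsP[k /negbTE c_k].
by rewrite /choice_weight (bigD1 k) //= c_k mul0r.
Qed.

Lemma sum_choice_weight : \sum_(c : {ffun 'I_n -> 'I_n}) choice_weight q c = 1.
Proof.
rewrite /choice_weight -(bigA_distr_bigA (fun k j : 'I_n =>
  if (j <= k)%N then q ^+ j / \sum_(i < k.+1) q ^+ i else 0)) /=.
apply: big1 => k _; rewrite -big_mkcondr /=.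
rewrite (eq_bigl (fun j : 'I_n => (j < k.+1)%N)) // -mulr_suml.
rewrite -(big_ord_widen _ (fun j => q ^+ j) (ltn_ord k)).
by rewrite mulfV // gt_eqF ?qsum_gt0.
Qed.

Lemma qmallows_law_mul_inv_count s :
  qmallows_law q s * q ^+ inv_count s = q ^+ (\sum_(k < n) k)%N / qfact q n.
Proof.
have [c0 c0_adm real_c0] := realizes_surj s.
have law_c0 : qmallows_law q s = choice_weight q c0.
  rewrite /qmallows_law (bigD1 c0 real_c0) /= big1 ?addr0 // => c /andP[real_c ne_c].
  have [c_adm|/choice_weight_inadmissible //] := boolP (admissible c).
  case/eqP: ne_c; apply: (choice_seq_inj c_adm c0_adm).
  exact: realizes_mproc_seq real_c real_c0.
have inv_s : inv_count s = (\sum_(k < n) (k - c0 k))%N.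
  rewrite (inv_count_inversions (size_mproc_seq _ _) (realizes_nth real_c0)).
  exact: inversions_choice_seq.
rewrite law_c0 choice_weight_admissible // inv_s mulrAC -exprD -big_split /=.
by congr (q ^+ _ / _); apply: eq_bigr => k _; rewrite subnKC //; apply: (forallP c0_adm).
Qed.

Lemma sum_qmallows_law : \sum_(s : 'S_n) qmallows_law q s = 1.
Proof.
rewrite -(sum_choice_weight) /qmallows_law (exchange_big_dep xpredT) //=.
apply: eq_bigr => c _; have [c_adm|c_nadm] := boolP (admissible c); last first.
  by rewrite choice_weight_inadmissible // big1.
rewrite (big_pred1 (mproc_perm c)) // => s /=.
apply/idP/eqP => [real_cs|->]; last exact: realizes_mproc_perm.
exact: realizes_inj real_cs (realizes_mproc_perm c_adm).
Qed.

End ChoiceWeights.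

Theorem lemma2p1 (R : realFieldType) (q : R) (hq : 0 < q) (n : nat)
    (hn : (1 <= n)%N) (s : 'S_n) :
  qmallows_law q s = mallows q^-1 s.
Proof.
have q_neq0 : q != 0 by rewrite gt_eqF.
set K := q ^+ (\sum_(k < n) k)%N / qfact q n.
have lawE (t : 'S_n) : qmallows_law q t = K * q^-1 ^+ inv_count t.
  by rewrite /K -(qmallows_law_mul_inv_count q t) exprVn mulfK ?expf_neq0.
have normK : (\sum_(t : 'S_n) q^-1 ^+ inv_count t) * K = 1.
  rewrite mulr_suml -(sum_qmallows_law hq n).
  by apply: eq_bigr => t _; rewrite lawE mulrC.
by rewrite /mallows lawE -(mulr1_eq normK) mulrC.
Qed.
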